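(* Let $\theta:\mathbb{R}^m\to(-\infty,\infty]$ be proper, convex and piecewise linear, let $\bar z\in\operatorname{dom}\partial\theta$, and let $S(\bar z)$ be the linear subspace parallel to the affine hull of $\partial\theta(\bar z)$. Then for every $\bar v\in\partial\theta(\bar z)$, $$\partial^2\theta(\bar z,\bar v)(0)=S(\bar z).$$
   Context: $\theta$ is (convex) piecewise linear if it is convex, proper, and its domain is a union of finitely many polyhedral sets on each of which $\theta$ is affine (equivalently, its epigraph is polyhedral). For convex $\theta$, $\partial\theta$ is the convex-analysis subdifferential. For $\Omega$ and $\bar x\in\Omega$: $\hat N(\bar x;\Omega)=\{v:\limsup_{x\to\bar x,\,x\in\Omega}\langle v,x-\bar x\rangle/\|x-\bar x\|\le0\}$, and the limiting normal cone $N(\bar x;\Omega)$ = limits of $v_k\in\hat N(x_k;\Omega)$, $x_k\to\bar x$ in $\Omega$. Coderivative: $D^*F(\bar x,\bar y)(v)=\{u:(u,-v)\in N((\bar x,\bar y);\operatorname{gph}F)\}$. Second-order subdifferential: $\partial^2\theta(\bar z,\bar v)(u):=D^*(\partial\theta)(\bar z,\bar v)(u)$. *)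

From mathcomp Require Import ssreflect ssrfun ssrbool eqtype ssrnat seq fintype bigop.
From Stdlib Require Import Reals List.
Open Scope R_scope.

Definition vec (m : nat) := 'I_m -> R.

Definition vzero {m} : vec m := fun _ => 0.
Definition vadd {m} (x y : vec m) : vec m := fun i => x i + y i.
Definition vsub {m} (x y : vec m) : vec m := fun i => x i - y i.
Definition vopp {m} (x : vec m) : vec m := fun i => - x i.
Definition vscale {m} (t : R) (x : vec m) : vec m := fun i => t * x i.

Definition dot {m} (x y : vec m) : R := \big[Rplus/0]_(i < m) (x i * y i).
Definition vnorm {m} (x : vec m) : R := sqrt (dot x x).

Definition pdot {m} (p q : vec m * vec m) : R := dot (fst p) (fst q) + dot (snd p) (snd q).
Definition psub {m} (p q : vec m * vec m) : vec m * vec m :=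
  (vsub (fst p) (fst q), vsub (snd p) (snd q)).
Definition pnorm {m} (p : vec m * vec m) : R := sqrt (pdot p p).

(* Extended-real-valued functions R^m -> (-oo, +oo]: None encodes +oo. *)
Definition efun (m : nat) := vec m -> option R.

Definition edom {m} (th : efun m) (x : vec m) : Prop := exists a, th x = Some a.

Definition proper_fun {m} (th : efun m) : Prop := exists x, edom th x.

Definition convex_fun {m} (th : efun m) : Prop :=
  forall x y a b t, th x = Some a -> th y = Some b -> 0 <= t <= 1 ->
    exists c, th (vadd (vscale t x) (vscale (1 - t) y)) = Some c /\
              c <= t * a + (1 - t) * b.

Definition polyhedron {m} (H : list (vec m * R)) (x : vec m) : Prop :=
  forall h, In h H -> dot (fst h) x <= snd h.

Definition piecewise_linear {m} (th : efun m) : Prop :=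
  convex_fun th /\ proper_fun th /\
  exists pieces : list (list (vec m * R) * (vec m * R)),
    (forall x, edom th x <-> exists P, In P pieces /\ polyhedron (fst P) x) /\
    (forall P x, In P pieces -> polyhedron (fst P) x ->
        th x = Some (dot (fst (snd P)) x + snd (snd P))).

Definition subdiff {m} (th : efun m) (z v : vec m) : Prop :=
  exists a, th z = Some a /\
    forall x b, th x = Some b -> a + dot v (vsub x z) <= b.

Definition aff_hull {m} (C : vec m -> Prop) (x : vec m) : Prop :=
  exists l : list (R * vec m),
    (forall p, In p l -> C (snd p)) /\
    fold_right (fun p s => fst p + s) 0 l = 1 /\
    x = fold_right (fun p s => vadd (vscale (fst p) (snd p)) s) vzero l.

(* The linear subspace parallel to aff C (for C nonempty): aff C - aff C. *)
Definition parallel_subspace {m} (C : vec m -> Prop) (x : vec m) : Prop :=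
  exists a b, aff_hull C a /\ aff_hull C b /\ x = vsub a b.

Definition S_sub {m} (th : efun m) (z : vec m) : vec m -> Prop :=
  parallel_subspace (subdiff th z).

(* Regular (Frechet) normal cone to Om at xb (in R^m x R^m), with the limsup
   written out:  limsup_{x -> xb, x in Om} <v, x - xb>/||x - xb|| <= 0. *)
Definition reg_normal {m} (Om : vec m * vec m -> Prop) (xb v : vec m * vec m) : Prop :=
  Om xb /\
  forall eps, 0 < eps -> exists delta, 0 < delta /\
    forall x, Om x -> 0 < pnorm (psub x xb) < delta ->
      pdot v (psub x xb) <= eps * pnorm (psub x xb).

Definition pconv {m} (s : nat -> vec m * vec m) (l : vec m * vec m) : Prop :=
  forall eps, 0 < eps -> exists N, forall k, (N <= k)%nat -> pnorm (psub (s k) l) < eps.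

Definition lim_normal {m} (Om : vec m * vec m -> Prop) (xb v : vec m * vec m) : Prop :=
  Om xb /\
  exists (xs vs : nat -> vec m * vec m),
    (forall k, Om (xs k)) /\ pconv xs xb /\
    (forall k, reg_normal Om (xs k) (vs k)) /\ pconv vs v.

Definition gph {m} (F : vec m -> vec m -> Prop) (p : vec m * vec m) : Prop :=
  F (fst p) (snd p).

Definition coderiv {m} (F : vec m -> vec m -> Prop) (xb yb v u : vec m) : Prop :=
  lim_normal (gph F) (xb, yb) (u, vopp v).

Definition subdiff2 {m} (th : efun m) (zb vb u w : vec m) : Prop :=
  coderiv (subdiff th) zb vb u w.

(* Inclusion S(zb) <= d^2 theta(zb,vb)(0): write w = P (p - q) with p, q
   subgradients, P >= 0.  By monotonicity of the subdifferential, (w,0) is a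
   regular normal to gph(subdiff theta) at every (zb, v_k),
   v_k = (1 - r_k) vb + r_k q, and v_k -> vb.

   Inclusion d^2 theta(zb,vb)(0) <= S(zb): let n be orthogonal to S(zb),
   i.e. <c,n> = <vb,n> for all subgradients c.  The local polyhedral
   structure of theta and LP duality (Farkas lemma) give
   theta(zb +- s n) <= theta(zb) +- s <vb,n> for small s, so the graph of the
   subdifferential is invariant near (zb,vb) under z |-> z + t n.  Regular
   normals nearby are therefore orthogonal to (n,0), and so is their limit
   (w,q): <w,n> = 0.  Since S(zb) is spanned by finitely many differences of
   subgradients (a rank argument), Farkas lemma again gives w in S(zb). *)

From mathcomp Require Import ssreflect ssrfun ssrbool eqtype ssrnat seq fintype bigop.
From mathcomp Require Import ssralg matrix mxalgebra.
From mathcomp Require Import Rstruct.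
From Stdlib Require Import Reals List Lra Classical FunctionalExtensionality ClassicalEpsilon.
Open Scope R_scope.
Set Implicit Arguments. Unset Strict Implicit.

(* The index type
   varies: 'I_m for vectors of R^m, and a larger type for the linear programs
   of the directional-derivative argument below. *)
Section InnerProduct.
Variable T : finType.
Implicit Types x y z a b u : T -> R.

Definition fdot x y := \big[Rplus/0]_(i : T) (x i * y i).

Lemma fdot_ext x y x' y' :
  (forall i, x i = x' i) -> (forall i, y i = y' i) -> fdot x y = fdot x' y'.
Proof. by move=> Ex Ey; apply: eq_bigr => i _; rewrite Ex Ey. Qed.

Lemma fdot_addl x y z : fdot (fun i => x i + y i) z = fdot x z + fdot y z.
Proof. rewrite /fdot -big_split; apply: eq_bigr => i _ /=; ring. Qed.

Lemma fdot_addr x y z : fdot z (fun i => x i + y i) = fdot z x + fdot z y.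
Proof. rewrite /fdot -big_split; apply: eq_bigr => i _ /=; ring. Qed.

Lemma fdot_scalel (t : R) x z : fdot (fun i => t * x i) z = t * fdot x z.
Proof. rewrite /fdot big_distrr; apply: eq_bigr => i _ /=; ring. Qed.

Lemma fdot_scaler (t : R) x z : fdot z (fun i => t * x i) = t * fdot z x.
Proof. rewrite /fdot big_distrr; apply: eq_bigr => i _ /=; ring. Qed.

Lemma fdot_sym x y : fdot x y = fdot y x.
Proof. by apply: eq_bigr => i _; ring. Qed.

Lemma fdot_subl x y z : fdot (fun i => x i - y i) z = fdot x z - fdot y z.
Proof.
rewrite (@fdot_ext _ _ (fun i => x i + (-1) * y i) z) ?fdot_addl ?fdot_scalel;
  [ring | move=> i /=; ring | done].
Qed.

Lemma fdot_subr x y z : fdot z (fun i => x i - y i) = fdot z x - fdot z y.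
Proof. by rewrite fdot_sym fdot_subl !(fdot_sym z). Qed.

Lemma fdot_oppl x z : fdot (fun i => - x i) z = - fdot x z.
Proof.
rewrite (@fdot_ext _ _ (fun i => (-1) * x i) z) ?fdot_scalel;
  [ring | move=> i /=; ring | done].
Qed.

Lemma fdot_oppr x z : fdot z (fun i => - x i) = - fdot z x.
Proof. by rewrite fdot_sym fdot_oppl fdot_sym. Qed.

Lemma fdot0l z : fdot (fun _ => 0) z = 0.
Proof. by rewrite /fdot big1 // => i _; ring. Qed.

Lemma fdot0r z : fdot z (fun _ => 0) = 0.
Proof. by rewrite fdot_sym fdot0l. Qed.

Lemma sum_ge0 (F : T -> R) : (forall i, 0 <= F i) -> 0 <= \big[Rplus/0]_(i : T) F i.
Proof. by move=> HF; elim/big_ind: _ => // [|x y]; lra. Qed.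

Lemma sum_ge_term (F : T -> R) j :
  (forall i, 0 <= F i) -> F j <= \big[Rplus/0]_(i : T) F i.
Proof.
move=> HF; rewrite (bigD1 j) //=.
have : 0 <= \big[Rplus/0]_(i | i != j) F i by elim/big_ind: _ => // [|x y]; lra.
lra.
Qed.

Lemma fdot_self_ge0 x : 0 <= fdot x x.
Proof. by apply: sum_ge0 => i; nra. Qed.

Lemma fdot_self_gt0 x i : x i <> 0 -> 0 < fdot x x.
Proof.
move=> Hi; have Hsq j : 0 <= x j * x j by nra.
have := @sum_ge_term (fun j => x j * x j) i Hsq; rewrite -/(fdot x x); nra.
Qed.

Lemma fdot_self_eq0 x : fdot x x = 0 -> forall i, x i = 0.
Proof. move=> H i; apply: NNPP => Hi; have := fdot_self_gt0 Hi; lra. Qed.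

Lemma fdot_amgm x y : 2 * fdot x y <= fdot x x + fdot y y.
Proof.
have := fdot_self_ge0 (fun i => x i - y i).
rewrite fdot_subl !fdot_subr (fdot_sym y x); lra.
Qed.

Lemma fdot_small a eps : 0 < eps ->
  exists rho, 0 < rho /\ forall e, fdot e e < rho -> Rabs (fdot a e) < eps.
Proof.
move=> He; have HA := fdot_self_ge0 a; set A := fdot a a in HA *.
set t := eps / (A + 1).
have Ht : 0 < t by apply: Rdiv_lt_0_compat; lra.
have HtA1 : t * (A + 1) = eps by rewrite /t; field; lra.
have HtA : t * A < eps by lra.
exists (t * eps); split; first exact: Rmult_lt_0_compat.
move=> e He2.
have Hm := fdot_self_ge0 (fun i => t * a i - e i).
have Hp := fdot_self_ge0 (fun i => t * a i + e i).
rewrite fdot_subl !fdot_subr !fdot_scalel !fdot_scaler (fdot_sym e a) -/A in Hm.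
rewrite fdot_addl !fdot_addr !fdot_scalel !fdot_scaler (fdot_sym e a) -/A in Hp.
apply: Rabs_def1; nra.
Qed.

(* The finitely generated cone:  cone G b  iff  b = sum_g mu_g g, mu_g >= 0.
   The recursive form peels off one generator at a time. *)
Fixpoint cone (G : list (T -> R)) (b : T -> R) : Prop :=
  match G with
  | nil => forall i, b i = 0
  | g :: G' => exists mu, 0 <= mu /\ cone G' (fun i => b i - mu * g i)
  end.

Lemma cone_ext G b b' : (forall i, b i = b' i) -> cone G b -> cone G b'.
Proof.
elim: G b b' => [|g G IH] b b' /= E; first by move=> H i; rewrite -E.
by case=> mu [Hmu H]; exists mu; split => //; apply: IH H => i; rewrite E.
Qed.

Lemma cone0 G : cone G (fun _ => 0).
Proof. elim: G => [|g G IH] //=; exists 0; split; [lra | apply: cone_ext IH => i; ring]. Qed.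

Lemma cone_add G b g mu :
  In g G -> 0 <= mu -> cone G b -> cone G (fun i => b i + mu * g i).
Proof.
elim: G b => [|g' G IH] b //= [<-|Hin] Hmu [mu' [Hmu' H]].
- by exists (mu + mu'); split; [lra | apply: cone_ext H => i; ring].
- exists mu'; split => //; have := IH _ Hin Hmu H; apply: cone_ext => i; ring.
Qed.

Lemma cone_ind (Q : (T -> R) -> Prop) (G : list (T -> R)) :
  (forall t, (forall i, t i = 0) -> Q t) ->
  (forall t g mu, In g G -> 0 <= mu -> Q (fun i => t i - mu * g i) -> Q t) ->
  forall t, cone G t -> Q t.
Proof.
elim: G => [|g G IH] H0 Hs t /=; first exact: H0.
case=> mu [Hmu Hc]; apply: (Hs t g mu (or_introl erefl) Hmu).
by apply: IH => // t' g' mu' Hg'; apply: Hs; right.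
Qed.

Lemma cone_dual_ge0 G b y :
  (forall g, In g G -> 0 <= fdot y g) -> cone G b -> 0 <= fdot y b.
Proof.
move=> Hy; apply: (@cone_ind (fun t => 0 <= fdot y t)) => [t Ht | t g mu Hg Hmu].
  by rewrite (@fdot_ext y t y (fun _ => 0)) // fdot0r; lra.
by rewrite fdot_subr fdot_scaler; have := Hy g Hg; nra.
Qed.

(* Projection along a, onto the hyperplane y^perp (when <y,a> <> 0). *)
Definition proj_along y a u : T -> R := fun i => u i - (fdot y u / fdot y a) * a i.

Lemma cone_proj_along y a G u :
  cone (map (proj_along y a) G) u ->
  exists r, cone G r /\ forall i, u i = proj_along y a r i.
Proof.
elim: G u => [|g G IH] u /=.
  by move=> H; exists (fun _ => 0); split => // i; rewrite /proj_along fdot0r H /Rdiv; ring.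
case=> mu [Hmu /IH [r [Hr Er]]].
exists (fun i => r i + mu * g i); split.
  by exists mu; split => //; apply: cone_ext Hr => i; ring.
move=> i; have := Er i; rewrite /proj_along fdot_addr fdot_scaler /Rdiv; lra.
Qed.

(* Induction on the number of generators, projecting the
   remaining ones along the new generator when the old certificate fails. *)
Theorem farkas G b : ~ cone G b ->
  exists y, (forall g, In g G -> 0 <= fdot y g) /\ fdot y b < 0.
Proof.
move: {2}(length G) (erefl (length G)) => n; elim: n G b => [|n IH] [|a G] b //= Hlen Hnc.
  have [i Hi] : exists i, b i <> 0.
    by apply: NNPP => Hn; apply: Hnc => i; apply: NNPP => Hbi; apply: Hn; exists i.
  by exists (fun i => - b i); split => //; rewrite fdot_oppl; have := fdot_self_gt0 Hi; lra.
case: Hlen => Hlen.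
have Hnc' : ~ cone G b.
  by move=> Hc; apply: Hnc; exists 0; split; [lra | apply: cone_ext Hc => i; ring].
case: (IH G b Hlen Hnc') => y [Hy Hyb].
case: (Rle_lt_dec 0 (fdot y a)) => Hya.
  by exists y; split => // g [<-|Hg] //; apply: Hy.
have Hnc2 : ~ cone (map (proj_along y a) G) (proj_along y a b).
  move=> /cone_proj_along [r [Hr Er]]; apply: Hnc.
  have Hyr := cone_dual_ge0 Hy Hr.
  exists ((fdot y b - fdot y r) / fdot y a); split.
    by apply: Rlt_le; apply: Rdiv_neg_neg; lra.
  apply: cone_ext Hr => i; have := Er i; rewrite /proj_along /Rdiv => E.
  by rewrite Rmult_minus_distr_r Rmult_minus_distr_r; lra.
case: (IH _ _ (etrans (length_map _ _) Hlen) Hnc2) => y' [Hy' Hy'b].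
set k := fdot y' a / fdot y a.
have Hshift u : fdot (fun i => y' i - k * y i) u = fdot y' (proj_along y a u).
  rewrite fdot_subl fdot_scalel /proj_along fdot_subr fdot_scaler /k /Rdiv.
  by rewrite (fdot_sym y' a); ring.
exists (fun i => y' i - k * y i); split; last by rewrite Hshift.
move=> g [<-|Hg]; rewrite Hshift.
  rewrite (@fdot_ext _ _ y' (fun _ => 0)) ?fdot0r; [lra | done |].
  by move=> i; rewrite /proj_along /Rdiv; field; lra.
by apply: Hy'; apply: in_map.
Qed.

End InnerProduct.

Lemma sum_opp (T : finType) (F : T -> R) :
  \big[Rplus/0]_(i : T) (- F i) = - \big[Rplus/0]_(i : T) F i.
Proof. by elim/big_rec2: _ => [|i a b _ ->]; ring. Qed.

Lemma sum_delta (T : finType) (i0 : T) (f : T -> R) :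
  \big[Rplus/0]_(i : T) (if i == i0 then f i else 0) = f i0.
Proof. by rewrite (bigD1 i0) //= eqxx big1 => [|i /negbTE ->]; ring. Qed.

Lemma sum_option (T : finType) (F : option T -> R) :
  \big[Rplus/0]_(w : option T) F w = F None + \big[Rplus/0]_(x : T) F (Some x).
Proof. by rewrite /index_enum !unlock /= /reducebig /= foldr_map !unlock. Qed.

Lemma sum_const_ord k (c : R) : \big[Rplus/0]_(j < k) c = INR k * c.
Proof.
rewrite big_const_ord; elim: k => [|k IH]; first by rewrite /=; ring.
by rewrite iterS IH S_INR; ring.
Qed.

Lemma In_nth (T : Type) (x0 : T) (s : list T) k : (k < size s)%nat -> In (seq.nth x0 s k) s.
Proof. by elim: s k => [|a s IH] [|k] //= H; [left | right; apply: IH]. Qed.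

Lemma nth_of_In (T : Type) (x0 : T) (s : list T) x :
  In x s -> exists k, (k < size s)%nat /\ seq.nth x0 s k = x.
Proof.
elim: s => [|a s IH] //= [->|/IH [k [Hk E]]]; first by exists O.
by exists k.+1.
Qed.

Lemma In_enum (T : finType) (x : T) : In x (enum T).
Proof.
have : x \in enum T by rewrite mem_enum.
elim: (enum T) => //= a s IH; rewrite seq.in_cons => /orP [/eqP ->|/IH]; by [left | right].
Qed.

(* Every set X of R^m contains a finite list D with D^perp included in
   X^perp: take D of maximal rank; then every u in X lies in the row space of
   the matrix with rows D. *)
Section FiniteSpanning.
Variable m : nat.

Definition rows_mx (D : list (vec m)) : 'M[R]_(size D, m) :=
  \matrix_(k < size D, i < m) (seq.nth vzero D k) i.

Lemma rows_mx_cons u D : (rows_mx D <= rows_mx (u :: D))%MS.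
Proof.
apply/row_subP => k; apply/submxP; exists (delta_mx ord0 (lift ord0 k)).
apply/rowP => i; rewrite !mxE (bigD1 (lift ord0 k)) //= !mxE eqxx /=.
rewrite big1 ?GRing.addr0 ?GRing.mul1r // => j /negbTE Hj.
by rewrite !mxE eq_sym Hj GRing.mul0r.
Qed.

Lemma max_rank_sublist (X : vec m -> Prop) : exists D : list (vec m),
  (forall d, In d D -> X d) /\
  forall D', (forall d, In d D' -> X d) -> (\rank (rows_mx D') <= \rank (rows_mx D))%nat.
Proof.
apply: NNPP => Hn.
have Hgrow k : exists D, (forall d, In d D -> X d) /\ (k <= \rank (rows_mx D))%nat.
  elim: k => [|k [D [HD Hk]]]; first by exists nil.
  apply: NNPP => Hno; apply: Hn; exists D; split => // D' HD'.
  rewrite leqNgt; apply/negP => Hlt; apply: Hno; exists D'; split => //.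
  exact: leq_ltn_trans Hk Hlt.
case: (Hgrow m.+1) => D [_]; by rewrite ltnNge rank_leq_col.
Qed.

Lemma rank_stable_comb u D : (\rank (rows_mx (u :: D)) <= \rank (rows_mx D))%nat ->
  exists x : 'I_(size D) -> R,
    forall i, u i = \big[Rplus/0]_(k < size D) (x k * seq.nth vzero D k i).
Proof.
move=> Hle.
have Hsub : (rows_mx (u :: D) <= rows_mx D)%MS.
  have [_ <-] := mxrank_leqif_sup (rows_mx_cons u D).
  by rewrite eqn_leq Hle mxrankS // rows_mx_cons.
have /submxP [x Ex] := submx_trans (row_sub ord0 _) Hsub.
exists (fun k => x ord0 k) => i.
have := congr1 (fun M : 'M[R]_(1, m) => M ord0 i) Ex; rewrite !mxE /= => ->.
by apply: eq_bigr => k _; rewrite !mxE.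
Qed.

Lemma finite_spanning_subset (X : vec m -> Prop) : exists D : list (vec m),
  (forall d, In d D -> X d) /\
  forall y, (forall d, In d D -> dot y d = 0) -> forall u, X u -> dot y u = 0.
Proof.
case: (max_rank_sublist X) => D [HD Hmax]; exists D; split => // y Hy u Hu.
have HuD : forall d, In d (u :: D) -> X d by move=> d [<-|/HD].
case: (rank_stable_comb (Hmax _ HuD)) => x Hx.
rewrite /dot (eq_bigr (fun i => \big[Rplus/0]_(k < size D)
                                  (x k * (y i * seq.nth vzero D k i)))); last first.
  by move=> i _; rewrite Hx big_distrr; apply: eq_bigr => k _ /=; ring.
rewrite exchange_big big1 // => k _ /=.
rewrite -big_distrr /= -/(dot y (seq.nth vzero D k)) Hy ?Rmult_0_r //.
exact: In_nth.
Qed.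

End FiniteSpanning.

Section Vectors.
Variable m : nat.
Implicit Types x y z a e : vec m.

Lemma dot_addr a x y : dot a (vadd x y) = dot a x + dot a y. Proof. exact: fdot_addr. Qed.
Lemma dot_addl a x y : dot (vadd x y) a = dot x a + dot y a. Proof. exact: fdot_addl. Qed.
Lemma dot_subr a x y : dot a (vsub x y) = dot a x - dot a y. Proof. exact: fdot_subr. Qed.
Lemma dot_subl a x y : dot (vsub x y) a = dot x a - dot y a. Proof. exact: fdot_subl. Qed.
Lemma dot_scaler a t x : dot a (vscale t x) = t * dot a x. Proof. exact: fdot_scaler. Qed.
Lemma dot_scalel a t x : dot (vscale t x) a = t * dot x a. Proof. exact: fdot_scalel. Qed.
Lemma dot_oppr a x : dot a (vopp x) = - dot a x. Proof. exact: fdot_oppr. Qed.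
Lemma dot_sym x y : dot x y = dot y x. Proof. exact: fdot_sym. Qed.
Lemma dot_ext x y x' y' :
  (forall i, x i = x' i) -> (forall i, y i = y' i) -> dot x y = dot x' y'.
Proof. exact: fdot_ext. Qed.
Lemma dot0r x : dot x vzero = 0. Proof. exact: fdot0r. Qed.
Lemma dot0l x : dot vzero x = 0. Proof. exact: fdot0l. Qed.
Lemma dot_self_ge0 x : 0 <= dot x x. Proof. exact: fdot_self_ge0. Qed.
Lemma dot_amgm x y : 2 * dot x y <= dot x x + dot y y. Proof. exact: fdot_amgm. Qed.
Lemma dot_small a eps : 0 < eps ->
  exists rho, 0 < rho /\ forall e, dot e e < rho -> Rabs (dot a e) < eps.
Proof. exact: fdot_small. Qed.

Lemma neg_dot (a x : vec m) : \big[Rplus/0]_(i < m) (x i * - a i) = - dot a x.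
Proof. by rewrite /dot -sum_opp; apply: eq_bigr => i _; ring. Qed.

Definition unit_vec (i : 'I_m) : vec m := fun i' => if i' == i then 1 else 0.

Lemma dot_unit_vec i (x : vec m) : dot (unit_vec i) x = x i.
Proof.
rewrite /dot (eq_bigr (fun k => if k == i then x k else 0)); first exact: sum_delta.
by move=> k _; rewrite /unit_vec; case: (k == i); ring.
Qed.

Lemma vadd_vsub z x : vadd z (vsub x z) = x.
Proof. by apply: functional_extensionality => i; rewrite /vadd /vsub; ring. Qed.

End Vectors.

Lemma shrink_factor D rho : 0 <= D -> 0 < rho ->
  exists s, 0 < s /\ s <= 1 /\ s * s * D < rho.
Proof.
move=> HD Hr; set s := rho / (D + rho).
have Hs : s * (D + rho) = rho by rewrite /s; field; lra.
have Hs0 : 0 < s by apply: Rdiv_lt_0_compat; lra.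
have Hs1 : s <= 1 by nra.
by exists s; do 2!split => //; nra.
Qed.

Section Jensen.
Variables (m : nat) (th : efun m).
Hypothesis hconv : convex_fun th.

Lemma sum_seq_ge0 (I : Type) (r : list I) (w : I -> R) :
  (forall j, In j r -> 0 <= w j) -> 0 <= \big[Rplus/0]_(j <- r) w j.
Proof.
elim: r => [|j r IH] H; rewrite ?big_nil ?big_cons; first lra.
by have := H j (or_introl erefl); have := IH (fun k Hk => H k (or_intror Hk)); lra.
Qed.

Lemma sum_seq_null (I : Type) (r : list I) (w f : I -> R) :
  (forall j, In j r -> 0 <= w j) -> \big[Rplus/0]_(j <- r) w j = 0 ->
  \big[Rplus/0]_(j <- r) (w j * f j) = 0.
Proof.
elim: r => [|j r IH] H; rewrite ?big_nil ?big_cons // => Hs.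
have Hr : forall k, In k r -> 0 <= w k by move=> k Hk; apply: H; right.
have Hsr := sum_seq_ge0 Hr; have Hj := H j (or_introl erefl).
have Hj0 : w j = 0 by lra.
by rewrite Hj0 IH //; lra.
Qed.

Lemma jensen (I : Type) (r : list I) (w : I -> R) (x : I -> vec m) (v : I -> R) :
  (forall j, In j r -> 0 <= w j) -> (forall j, In j r -> th (x j) = Some (v j)) ->
  \big[Rplus/0]_(j <- r) w j = 1 ->
  exists c, th (fun i => \big[Rplus/0]_(j <- r) (w j * x j i)) = Some c /\
            c <= \big[Rplus/0]_(j <- r) (w j * v j).
Proof.
elim: r w => [|j r IH] w Hw Hx; rewrite ?big_nil ?big_cons; first lra.
move=> Hs.
have Hw' : forall k, In k r -> 0 <= w k by move=> k Hk; apply: Hw; right.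
have Hx' : forall k, In k r -> th (x k) = Some (v k) by move=> k Hk; apply: Hx; right.
have HW := sum_seq_ge0 Hw'; set W := \big[Rplus/0]_(k <- r) w k in HW Hs.
have Hxj := Hx j (or_introl erefl).
case: (Req_dec W 0) => HW0.
  have Hwj : w j = 1 by lra.
  exists (v j); split; last by rewrite (sum_seq_null v Hw' HW0) Hwj; lra.
  rewrite -Hxj; congr th; apply: functional_extensionality => i.
  by rewrite big_cons; move: (sum_seq_null (fun k => x k i) Hw' HW0) => /= ->; rewrite Hwj; ring.
have Hw2 : forall k, In k r -> 0 <= w k / W.
  by move=> k Hk; apply: Rmult_le_pos; [apply: Hw' | apply/Rlt_le/Rinv_0_lt_compat; lra].
have Hs2 : \big[Rplus/0]_(k <- r) (w k / W) = 1.
  by rewrite /Rdiv -big_distrl /= -/W; field; lra.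
case: (IH (fun k => w k / W) Hw2 Hx' Hs2) => c' [Hc' Hle'].
case: (hconv Hxj Hc' (conj (Hw j (or_introl erefl)) (ltac:(lra) : w j <= 1)))
  => c [Hc Hcle].
have E1 : 1 - w j = W by lra.
rewrite E1 in Hc Hcle; exists c; split.
  rewrite -Hc; congr th; apply: functional_extensionality => i.
  rewrite big_cons /vadd /vscale big_distrr /=; congr Rplus.
  by apply: eq_bigr => k _; field; lra.
have -> : \big[Rplus/0]_(k <- r) (w k * v k) =
          W * \big[Rplus/0]_(k <- r) (w k / W * v k).
  by rewrite big_distrr /=; apply: eq_bigr => k _; field; lra.
have : W * c' <= W * \big[Rplus/0]_(k <- r) (w k / W * v k).
  by apply: Rmult_le_compat_l; lra.
lra.
Qed.

Lemma jensen_uniform k (x : 'I_k -> vec m) (v : 'I_k -> R) : (0 < k)%nat ->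
  (forall j, th (x j) = Some (v j)) ->
  exists c, th (fun i => / INR k * \big[Rplus/0]_(j < k) x j i) = Some c /\
            c <= / INR k * \big[Rplus/0]_(j < k) v j.
Proof.
move=> Hk Hx; have Hkr : 0 < INR k by apply: lt_0_INR; apply/ltP.
have Hw : forall j, In j (index_enum 'I_k) -> 0 <= / INR k.
  by move=> j _; apply/Rlt_le/Rinv_0_lt_compat.
have Hw1 : \big[Rplus/0]_(j <- index_enum 'I_k) / INR k = 1.
  by change (\big[Rplus/0]_(j < k) / INR k = 1); rewrite sum_const_ord; field; lra.
case: (jensen Hw (fun j _ => Hx j) Hw1) => c [Hc1 Hc2].
exists c; split; last by rewrite big_distrr.
by rewrite -Hc1; congr th; apply: functional_extensionality => i; rewrite big_distrr.
Qed.

End Jensen.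

Section Normals.
Variable m : nat.
Implicit Types p u : vec m * vec m.

Lemma pdot_self_ge0 p : 0 <= pdot p p.
Proof. by rewrite /pdot; have := dot_self_ge0 p.1; have := dot_self_ge0 p.2; lra. Qed.

Lemma pnorm_sq p : pnorm p * pnorm p = pdot p p.
Proof. by rewrite /pnorm sqrt_sqrt //; apply: pdot_self_ge0. Qed.

Lemma pnorm_lt_sqrt p r : pnorm p < sqrt r -> pdot p p < r.
Proof. exact: sqrt_lt_0_alt. Qed.

Lemma pnorm_lt p eps : 0 < eps -> pdot p p < eps * eps -> pnorm p < eps.
Proof.
move=> He H; rewrite -(sqrt_square eps); last lra.
by apply: sqrt_lt_1_alt; split => //; apply: pdot_self_ge0.
Qed.

Lemma pdot_shift (z v n : vec m) t u :
  pdot u (psub (vadd z (vscale t n), v) (z, v)) = t * dot u.1 n.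
Proof.
rewrite /pdot /psub /= (@dot_ext _ u.1 _ u.1 (vscale t n)) //; last first.
  by move=> i; rewrite /vsub /vadd /vscale; ring.
rewrite (@dot_ext _ u.2 (vsub v v) u.2 vzero) ?dot_scaler ?dot0r //; first ring.
by move=> i; rewrite /vsub /vzero; ring.
Qed.

Lemma pnorm_shift (z v n : vec m) t :
  pnorm (psub (vadd z (vscale t n), v) (z, v)) = Rabs t * sqrt (dot n n).
Proof.
rewrite /pnorm pdot_shift /= (@dot_ext _ (vsub _ z) n (vscale t n) n) //; last first.
  by move=> i; rewrite /vsub /vadd /vscale; ring.
rewrite dot_scalel -sqrt_Rsqr_abs -sqrt_mult_alt; last exact: Rle_0_sqr.
by congr sqrt; rewrite /Rsqr; ring.
Qed.

(* A regular normal to Om at p is orthogonal to every direction n along which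
   Om contains a segment through p: testing with p + t n, t -> 0+ and t -> 0-
   bounds +-<u_1,n> by eps * |n| for every eps > 0. *)
Lemma regular_normal_orthogonal (Om : vec m * vec m -> Prop) p u (n : vec m) t0 :
  0 < t0 -> (forall t, Rabs t <= t0 -> Om (vadd p.1 (vscale t n), p.2)) ->
  reg_normal Om p u -> dot u.1 n = 0.
Proof.
case: p => z v /= Ht0 Hseg [_ Hreg]; case: (Req_dec (dot n n) 0) => HN.
  by rewrite (@dot_ext _ u.1 n u.1 vzero) ?dot0r // => i; apply: fdot_self_eq0.
have Hnn : 0 < sqrt (dot n n) by apply: sqrt_lt_R0; have := dot_self_ge0 n; lra.
set nn := sqrt (dot n n) in Hnn.
have Hside s : Rabs s = 1 -> forall eps, 0 < eps -> s * dot u.1 n <= eps * nn.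
  move=> Hs eps He; case: (Hreg eps He) => delta [Hdel Hx].
  set t := Rmin t0 (delta / (2 * nn)).
  have Htp : 0 < t by apply: Rmin_pos => //; apply: Rdiv_lt_0_compat; lra.
  have Htn : t * nn < delta.
    have : delta / (2 * nn) * nn = delta / 2 by field; lra.
    by have := Rmin_r t0 (delta / (2 * nn)); rewrite -/t; nra.
  have Hst : Rabs (s * t) = t by rewrite Rabs_mult Hs Rabs_right; lra.
  have Hin := Hseg (s * t) ltac:(rewrite Hst; exact: Rmin_l).
  have := Hx _ Hin; rewrite pnorm_shift pdot_shift Hst -/nn => /(_ ltac:(split; nra)) H.
  by apply: (Rmult_le_reg_l t) => //; nra.
have H1 := Hside 1 ltac:(rewrite Rabs_R1; lra).
have H2 := Hside (-1) ltac:(rewrite Rabs_Ropp Rabs_R1; lra).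
case: (Rtotal_order (dot u.1 n) 0) => [Hlt|[//|Hgt]].
- have := H2 (- dot u.1 n / (2 * nn)) ltac:(apply: Rdiv_lt_0_compat; lra).
  have : - dot u.1 n / (2 * nn) * nn = - dot u.1 n / 2 by field; lra.
  lra.
- have := H1 (dot u.1 n / (2 * nn)) ltac:(apply: Rdiv_lt_0_compat; lra).
  have : dot u.1 n / (2 * nn) * nn = dot u.1 n / 2 by field; lra.
  lra.
Qed.

Lemma orthogonal_limit (us : nat -> vec m * vec m) u (n : vec m) N :
  pconv us u -> (forall k, (N <= k)%nat -> dot (us k).1 n = 0) -> dot u.1 n = 0.
Proof.
move=> Hcv Horth; apply: NNPP => Hne.
have He : 0 < Rabs (dot u.1 n) by apply: Rabs_pos_lt.
case: (dot_small n He) => rho [Hr Hsm].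
case: (Hcv (sqrt rho) (sqrt_lt_R0 _ Hr)) => N' HN'; set k := maxn N N'.
have := pnorm_lt_sqrt (HN' k (leq_maxr N N')); rewrite /pdot /psub /= => Hd.
have Hd1 : dot (vsub (us k).1 u.1) (vsub (us k).1 u.1) < rho.
  by have := dot_self_ge0 (vsub (us k).2 u.2); lra.
have := Hsm _ Hd1; rewrite dot_subr (dot_sym n) (Horth k (leq_maxl N N')) dot_sym.
by rewrite Rminus_0_l Rabs_Ropp; lra.
Qed.

Lemma pconv_const u : pconv (fun _ : nat => u) u.
Proof.
move=> eps He; exists O => k _; apply: pnorm_lt => //.
rewrite /pdot /psub /= !(@dot_ext _ (vsub _ _) (vsub _ _) vzero vzero) ?dot0r;
  try by move=> i; rewrite /vsub /vzero; ring.
nra.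
Qed.

Lemma pconv_segment (z a b : vec m) :
  pconv (fun k => (z, vadd (vscale (1 - / (INR k + 1)) a) (vscale (/ (INR k + 1)) b))) (z, a).
Proof.
move=> eps He; have HD := dot_self_ge0 (vsub b a); set D := dot (vsub b a) _ in HD *.
case: (archimed_cor1 (eps * eps / (D + 1))) => [|N [HN HN0]].
  by apply: Rdiv_lt_0_compat; nra.
exists N => k Hk; apply: pnorm_lt => //; rewrite /pdot /psub /=.
set r := / (INR k + 1).
have Hk1 : 0 < INR k + 1 by have := pos_INR k; lra.
have HNk : INR N <= INR k by apply: le_INR; apply/leP.
have HN1 : 0 < INR N by apply: lt_0_INR.
have Hr : 0 < r <= / INR N.
  by split; [apply: Rinv_0_lt_compat | apply: Rinv_le_contravar]; lra.
have Hr1 : r <= 1 by rewrite /r -Rinv_1; apply: Rinv_le_contravar; lra.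
rewrite (@dot_ext _ (vsub z z) (vsub z z) vzero vzero) ?dot0r;
  try by move=> i; rewrite /vsub /vzero; ring.
rewrite (@dot_ext _ (vsub _ a) (vsub _ a) (vscale r (vsub b a)) (vscale r (vsub b a)));
  try by move=> i; rewrite /vsub /vadd /vscale; ring.
rewrite dot_scalel dot_scaler -/D.
have Hlt : / INR N * (D + 1) < eps * eps.
  have : eps * eps / (D + 1) * (D + 1) = eps * eps by field; lra.
  by have := Rmult_lt_compat_r (D + 1) _ _ ltac:(lra) HN; lra.
have : r * (r * D) <= / INR N * (D + 1).
  apply: Rle_trans (_ : r * (1 * (D + 1)) <= _); first by apply: Rmult_le_compat_l; nra.
  by rewrite Rmult_1_l; apply: Rmult_le_compat_r; lra.
lra.
Qed.

End Normals.

Section Polyhedral.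
Variables (m : nat) (th : efun m) (zb : vec m) (a0 : R).
Variable pieces : list (list (vec m * R) * (vec m * R)).
Hypothesis hconv : convex_fun th.
Hypothesis hdom : forall x, edom th x <-> exists P, In P pieces /\ polyhedron (fst P) x.
Hypothesis haff : forall P x, In P pieces -> polyhedron (fst P) x ->
  th x = Some (dot (fst (snd P)) x + snd (snd P)).
Hypothesis hz : th zb = Some a0.

Definition active (P : list (vec m * R) * (vec m * R)) := polyhedron (fst P) zb.
Definition tangent (P : list (vec m * R) * (vec m * R)) (d : vec m) :=
  forall h, In h (fst P) -> dot (fst h) zb = snd h -> dot (fst h) d <= 0.

Lemma tangent_scale P t d : 0 <= t -> tangent P d -> tangent P (vscale t d).
Proof. by move=> Ht H h Hh Heq; rewrite dot_scaler; have := H h Hh Heq; nra. Qed.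

Lemma strict_constraints_stable (L : list (vec m * R)) :
  exists rho, 0 < rho /\ forall e, dot e e < rho -> forall h, In h L ->
    (dot (fst h) zb < snd h -> dot (fst h) (vadd zb e) < snd h) /\
    (snd h < dot (fst h) zb -> snd h < dot (fst h) (vadd zb e)).
Proof.
elim: L => [|h L [r1 [Hr1 IH]]]; first by exists 1; split => //; lra.
case: (Req_dec (dot (fst h) zb) (snd h)) => Heq.
  by exists r1; split => // e He h' [<-|Hh']; [rewrite Heq; lra | apply: IH].
have Heps : 0 < Rabs (dot (fst h) zb - snd h) by apply: Rabs_pos_lt; lra.
case: (dot_small (fst h) Heps) => r2 [Hr2 H2].
exists (Rmin r1 r2); split; first exact: Rmin_pos.
move=> e He h' [<-|Hh']; last by apply: IH => //; apply: Rlt_le_trans He (Rmin_l _ _).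
have /Rabs_def2 := H2 e (Rlt_le_trans _ _ _ He (Rmin_r _ _)); rewrite dot_addr.
by case: (Rlt_le_dec (dot (fst h) zb) (snd h)) Heps => Hc;
  [rewrite Rabs_left | rewrite Rabs_right]; lra.
Qed.

Lemma local_structure : exists rho, 0 < rho /\
  (forall e P, dot e e < rho -> In P pieces -> polyhedron (fst P) (vadd zb e) ->
     active P /\ tangent P e) /\
  (forall e P, dot e e < rho -> In P pieces -> active P -> tangent P e ->
     polyhedron (fst P) (vadd zb e)).
Proof.
case: (strict_constraints_stable (flat_map fst pieces)) => rho [Hr H].
exists rho; split => //; split => e P He HP.
- move=> Hpol; split=> h Hh.
    have Hin : In h (flat_map fst pieces) by apply/in_flat_map; exists P.
    apply: Rnot_lt_le => /(proj2 (H e He h Hin)); have := Hpol h Hh; lra.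
  by move=> Heq; have := Hpol h Hh; rewrite dot_addr; lra.
- move=> Hact HK h Hh.
  have Hin : In h (flat_map fst pieces) by apply/in_flat_map; exists P.
  case: (Req_dec (dot (fst h) zb) (snd h)) => Heq.
    by rewrite dot_addr; have := HK h Hh Heq; lra.
  have Hlt : dot (fst h) zb < snd h by have := Hact h Hh; lra.
  by have := proj1 (H e He h Hin) Hlt; lra.
Qed.

Lemma active_piece_value P e : In P pieces -> active P -> polyhedron (fst P) (vadd zb e) ->
  th (vadd zb e) = Some (a0 + dot (fst (snd P)) e).
Proof.
move=> HP Ha Hpol; rewrite (haff HP Hpol); have := haff HP Ha; rewrite hz => -[->].
by rewrite dot_addr; congr Some; ring.
Qed.

Lemma local_subgradient c rho : 0 < rho ->
  (forall e b, dot e e < rho -> th (vadd zb e) = Some b -> a0 + dot c e <= b) ->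
  subdiff th zb c.
Proof.
move=> Hr H; exists a0; split => // x b Hx; set e := vsub x zb.
apply: Rnot_lt_le => Hlt.
case: (shrink_factor (dot_self_ge0 e) Hr) => s [Hs0 [Hs1 Hs2]].
case: (hconv Hx hz (conj (Rlt_le _ _ Hs0) Hs1)) => [ct [Hct Hle]].
have E : vadd (vscale s x) (vscale (1 - s) zb) = vadd zb (vscale s e).
  by apply: functional_extensionality => i; rewrite /vadd /vscale /e /vsub; ring.
rewrite E in Hct.
have Hd : dot (vscale s e) (vscale s e) < rho by rewrite dot_scalel dot_scaler; lra.
by have := H _ _ Hd Hct; rewrite dot_scaler; nra.
Qed.

Lemma subgradient_of_tangent_bounds c :
  (forall P, In P pieces -> active P -> forall d, tangent P d ->
     dot c d <= dot (fst (snd P)) d) ->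
  subdiff th zb c.
Proof.
move=> H; case: local_structure => rho [Hr [H1 _]].
apply: (local_subgradient Hr) => e b He Hb.
have /hdom [P [HP Hpol]] : edom th (vadd zb e) by exists b.
case: (H1 e P He HP Hpol) => Ha HK.
rewrite (active_piece_value HP Ha Hpol) in Hb; case: Hb => <-.
by have := H P HP Ha e HK; lra.
Qed.

(* The converse: subgradients obey these bounds (test the subgradient
   inequality at zb + s d for small s > 0). *)
Lemma subgradient_tangent_bound v : subdiff th zb v ->
  forall P, In P pieces -> active P -> forall d, tangent P d ->
    dot v d <= dot (fst (snd P)) d.
Proof.
case=> a [Ha Hv] P HP Hact d HK; rewrite hz in Ha; case: Ha => Ha; subst a.
case: local_structure => rho [Hr [_ H2]].
case: (shrink_factor (dot_self_ge0 d) Hr) => s [Hs0 [Hs1 Hs2]].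
have Hd : dot (vscale s d) (vscale s d) < rho by rewrite dot_scalel dot_scaler; lra.
have Hpol := H2 _ _ Hd HP Hact (tangent_scale (Rlt_le _ _ Hs0) HK).
have := Hv _ _ (active_piece_value HP Hact Hpol).
rewrite (@dot_ext _ v (vsub (vadd zb (vscale s d)) zb) v (vscale s d)) //; last first.
  by move=> i; rewrite /vsub /vadd /vscale; ring.
by rewrite !dot_scaler => H; apply: (Rmult_le_reg_l s) => //; lra.
Qed.

(* If n is a direction in which v is a
   maximal subgradient (<c,n> <= <v,n> for all c in the subdifferential),
   then theta(zb + s n) <= a0 + s <v,n> for small s > 0.  LP duality (Farkas)
   splits n into tangent directions d_j of the active pieces with
   sum_j <c_j,d_j> <= <v,n>, and Jensen's inequality recombines them. *)

Let K := size pieces.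
Let dflt : list (vec m * R) * (vec m * R) := (nil, (vzero, 0)).
Definition piece (j : 'I_K) := seq.nth dflt pieces j.
Definition slope (j : 'I_K) : vec m := fst (snd (piece j)).
Definition is_active (j : 'I_K) : bool :=
  if excluded_middle_informative (active (piece j)) then true else false.
Definition tight (j : 'I_K) : list (vec m) :=
  map fst (filter (fun h => if Req_EM_T (dot (fst h) zb) (snd h) then true else false)
                  (fst (piece j))).

Lemma is_activeP j : is_active j = true <-> active (piece j).
Proof. by rewrite /is_active; case: excluded_middle_informative. Qed.

Lemma piece_in j : In (piece j) pieces.
Proof. exact: In_nth. Qed.

Lemma piece_index P : In P pieces -> exists j : 'I_K, piece j = P.
Proof. by case/(nth_of_In dflt) => k [Hk E]; exists (Ordinal Hk). Qed.

Lemma subgradient_of_block_bounds c :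
  (forall j, is_active j = true -> forall d, tangent (piece j) d ->
     dot c d <= dot (slope j) d) ->
  subdiff th zb c.
Proof.
move=> H; apply: subgradient_of_tangent_bounds => P HP Hact d HK.
by case: (piece_index HP) => j Ej; subst P; apply: H => //; apply/is_activeP.
Qed.

Lemma subgradient_block_bound v j d : subdiff th zb v -> is_active j = true ->
  tangent (piece j) d -> dot v d <= dot (slope j) d.
Proof.
by move=> Hv /is_activeP Hj HK; apply: (subgradient_tangent_bound Hv (piece_in j) Hj HK).
Qed.

Lemma tight_tangent j d : (forall a, In a (tight j) -> dot a d <= 0) -> tangent (piece j) d.
Proof.
move=> H h Hh Heq; apply: H; apply/in_map_iff; exists h; split => //.
by apply/filter_In; split => //; case: Req_EM_T.
Qed.

Lemma tangent_tight j d a : tangent (piece j) d -> In a (tight j) -> dot a d <= 0.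
Proof.
move=> H /in_map_iff [h [<- /filter_In [Hh Heq]]].
by apply: H => //; move: Heq; case: Req_EM_T.
Qed.

Lemma cone_tangent_le0 (A : list (vec m)) u d :
  cone A u -> (forall a, In a A -> dot a d <= 0) -> dot u d <= 0.
Proof.
move=> Hc H; have Hy : forall g, In g A -> 0 <= fdot (fun i => - d i) g.
  by move=> g Hg; rewrite fdot_oppl fdot_sym; have : fdot g d <= 0 := H g Hg; lra.
have := cone_dual_ge0 Hy Hc; rewrite fdot_oppl fdot_sym.
by have : dot u d = fdot u d by []; lra.
Qed.

(* The linear program lives on R^(1 + K*m): coordinate None carries the
   objective, coordinate (j,i) the i-th entry of the direction d_j. *)
Definition lp_index := option ('I_K * 'I_m).

Lemma fdot_lp (y g : lp_index -> R) : fdot y g =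
  y None * g None +
  \big[Rplus/0]_(j < K) \big[Rplus/0]_(i < m) (y (Some (j, i)) * g (Some (j, i))).
Proof. by rewrite /fdot sum_option pair_bigA; congr Rplus; apply: eq_bigr => -[]. Qed.

(* The vector (1 ; 0), to be separated from the primal cone. *)
Definition lp_target : lp_index -> R := fun w => if w is None then 1 else 0.

Section LinearProgram.
Variables (n : vec m) (al : R).

Definition gen_coord (i : 'I_m) : lp_index -> R := fun w =>
  match w with None => n i | Some p => if is_active p.1 && (p.2 == i) then 1 else 0 end.
Definition gen_coord_opp (i : 'I_m) : lp_index -> R := fun w => - gen_coord i w.
Definition gen_value : lp_index -> R := fun w =>
  match w with None => - al | Some p => if is_active p.1 then - slope p.1 p.2 else 0 end.
Definition gen_tight (j : 'I_K) (a : vec m) : lp_index -> R := fun w =>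
  match w with None => 0 | Some p => if p.1 == j then - a p.2 else 0 end.

Definition generators : list (lp_index -> R) :=
  map gen_coord (enum 'I_m) ++ map gen_coord_opp (enum 'I_m) ++ gen_value ::
  flat_map (fun j => if is_active j then map (gen_tight j) (tight j) else nil) (enum 'I_K).

Lemma in_generators g : In g generators ->
  (exists i, g = gen_coord i) \/ (exists i, g = gen_coord_opp i) \/ g = gen_value \/
  (exists j a, is_active j = true /\ In a (tight j) /\ g = gen_tight j a).
Proof.
rewrite /generators => /in_app_iff [/in_map_iff [i [<- _]]|]; first by left; exists i.
move=> /in_app_iff [/in_map_iff [i [<- _]]|]; first by right; left; exists i.
case=> [<-|/in_flat_map [j [_]]]; first by right; right; left.
by case E: (is_active j) => // /in_map_iff [a [<- Ha]]; right; right; right; exists j, a.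
Qed.

Lemma gen_coord_in i : In (gen_coord i) generators.
Proof. by apply/in_app_iff; left; apply/in_map_iff; exists i; split => //; apply: In_enum. Qed.

Lemma gen_coord_opp_in i : In (gen_coord_opp i) generators.
Proof.
apply/in_app_iff; right; apply/in_app_iff; left.
by apply/in_map_iff; exists i; split => //; apply: In_enum.
Qed.

Lemma gen_value_in : In gen_value generators.
Proof. by apply/in_app_iff; right; apply/in_app_iff; right; left. Qed.

Lemma gen_tight_in j a : is_active j = true -> In a (tight j) -> In (gen_tight j a) generators.
Proof.
move=> Hj Ha; apply/in_app_iff; right; apply/in_app_iff; right; right.
apply/in_flat_map; exists j; split; first exact: In_enum.
by rewrite Hj; apply/in_map_iff; exists a.
Qed.

Definition primal_form (t : lp_index -> R) :=
  exists (c : vec m) (tau : R) (u : 'I_K -> vec m), 0 <= tau /\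
  (forall j, is_active j = true -> cone (tight j) (u j) /\
     forall i, t (Some (j, i)) = c i - tau * slope j i - u j i) /\
  t None = dot c n - tau * al.

Lemma primal_form_cone t : cone generators t -> primal_form t.
Proof.
apply: cone_ind => [t0 H0 | t0 g mu Hg Hmu [c [tau [u [Htau [Hrows HN]]]]]].
  exists vzero, 0, (fun _ => vzero); split; first lra; split; last by rewrite H0 dot0l; ring.
  by move=> j _; split; [exact: cone0 | move=> i; rewrite H0 /vzero; ring].
case: (in_generators Hg) => [[i Eg]|[[i Eg]|[Eg|[j0 [a [Hj0 [Ha Eg]]]]]]]; subst g.
- exists (vadd c (vscale mu (unit_vec i))), tau, u; split => //; split.
    move=> j Hj; case: (Hrows j Hj) => Hc Hr; split => // i'; have := Hr i'.
    by rewrite /= /vadd /vscale /unit_vec Hj /=; lra.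
  by move: HN; rewrite /= dot_addl dot_scalel dot_unit_vec; lra.
- exists (vadd c (vscale (- mu) (unit_vec i))), tau, u; split => //; split.
    move=> j Hj; case: (Hrows j Hj) => Hc Hr; split => // i'; have := Hr i'.
    by rewrite /gen_coord_opp /= /vadd /vscale /unit_vec Hj /=; lra.
  by move: HN; rewrite /gen_coord_opp /= dot_addl dot_scalel dot_unit_vec; lra.
- exists c, (tau + mu), u; split; first lra; split; last by move: HN => /=; lra.
  move=> j Hj; case: (Hrows j Hj) => Hc Hr; split => // i'.
  by have := Hr i'; rewrite /= Hj; lra.
- exists c, tau, (fun j => if j == j0 then vadd (u j) (vscale mu a) else u j).
  split => //; split; last by move: HN => /=; lra.
  move=> j Hj; case: (Hrows j Hj) => Hc Hr; case E: (j == j0).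
    move/eqP: E => E; subst j0; split; first exact: cone_add.
    by move=> i'; have := Hr i'; rewrite /= eqxx /vadd /vscale; lra.
  by split => // i'; have := Hr i'; rewrite /= E; lra.
Qed.

Definition block (y : lp_index -> R) (j : 'I_K) : vec m := fun i => y (Some (j, i)).

Lemma fdot_gen_coord y i : fdot y (gen_coord i) =
  y None * n i + \big[Rplus/0]_(j < K) (if is_active j then block y j i else 0).
Proof.
rewrite fdot_lp; congr Rplus; apply: eq_bigr => j _ /=.
case: (is_active j) => /=; last by rewrite big1 // => i' _; ring.
rewrite (eq_bigr (fun i' => if i' == i then block y j i' else 0)); first exact: sum_delta.
by move=> i' _; case: (i' == i); rewrite /block /=; ring.
Qed.

Lemma fdot_gen_tight y j0 a : fdot y (gen_tight j0 a) = - dot a (block y j0).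
Proof.
rewrite fdot_lp /= Rmult_0_r Rplus_0_l -neg_dot.
rewrite -(sum_delta j0 (fun j => \big[Rplus/0]_(i < m) (block y j i * - a i))).
apply: eq_bigr => j _; case: (j == j0); first by apply: eq_bigr.
by rewrite big1 // => i _; ring.
Qed.

Lemma fdot_gen_value y : fdot y gen_value =
  - (y None * al) -
  \big[Rplus/0]_(j < K) (if is_active j then dot (slope j) (block y j) else 0).
Proof.
rewrite fdot_lp /= /Rminus -sum_opp; congr Rplus; first ring.
apply: eq_bigr => j _; case: (is_active j); first exact: neg_dot.
by rewrite big1 => [|i _]; ring.
Qed.

Lemma tangent_decomposition_of_certificate y :
  (forall g, In g generators -> 0 <= fdot y g) -> fdot y lp_target < 0 ->
  exists d : 'I_K -> vec m,
    (forall i, \big[Rplus/0]_(j < K) d j i = n i) /\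
    (forall j, is_active j = true -> tangent (piece j) (d j)) /\
    (forall j, is_active j = false -> d j = vzero) /\
    \big[Rplus/0]_(j < K) dot (slope j) (d j) <= al.
Proof.
move=> Hy Htg.
have Hy0 : y None < 0.
  by move: Htg; rewrite fdot_lp /= big1 => [|j _]; [lra | rewrite big1 // => i _; ring].
set nu := - y None; have Hnu : 0 < nu by rewrite /nu; lra.
have Hinv : 0 < / nu by apply: Rinv_0_lt_compat.
exists (fun j => if is_active j then vscale (/ nu) (block y j) else vzero).
split; [|split; [|split]].
- move=> i; have H1 := Hy _ (gen_coord_in i); have H2 := Hy _ (gen_coord_opp_in i).
  rewrite /gen_coord_opp fdot_oppr fdot_gen_coord in H1 H2.
  rewrite (eq_bigr (fun j => / nu * (if is_active j then block y j i else 0))); last first.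
    by move=> j _; case: (is_active j); rewrite /vscale /vzero //; ring.
  rewrite -big_distrr /=.
  set S := \big[Rplus/0]_(j < K) _ in H1 H2 *.
  by apply: (Rmult_eq_reg_l nu); [rewrite -Rmult_assoc Rinv_r /nu; lra | lra].
- move=> j Hj; rewrite Hj; apply: tangent_scale; first lra.
  apply: tight_tangent => a Ha.
  by have := Hy _ (gen_tight_in Hj Ha); rewrite fdot_gen_tight; lra.
- by move=> j ->.
- have := Hy _ gen_value_in; rewrite fdot_gen_value -/nu => Hval.
  rewrite (eq_bigr (fun j => / nu *
             (if is_active j then dot (slope j) (block y j) else 0))); last first.
    by move=> j _; case: (is_active j); [rewrite dot_scaler | rewrite dot0r; ring].
  rewrite -big_distrr /=; set S := \big[Rplus/0]_(j < K) _ in Hval *.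
  by apply: (Rmult_le_reg_l nu) => //; rewrite -Rmult_assoc Rinv_r /nu; lra.
Qed.

(* Primal side: if lp_target is in the primal cone, some subgradient beats
   v in direction n (it exceeds <v,n> = al by 1/tau, or by 1 when tau = 0). *)
Lemma better_subgradient_of_primal v :
  subdiff th zb v -> al = dot v n -> cone generators lp_target ->
  exists c, subdiff th zb c /\ dot v n < dot c n.
Proof.
move=> Hv Hal /primal_form_cone [c [tau [u [Htau [Hrows HN]]]]].
have Hcj j d : is_active j = true -> tangent (piece j) d ->
    dot c d = tau * dot (slope j) d + dot (u j) d /\ dot (u j) d <= 0.
  move=> Hj HK; case: (Hrows j Hj) => Hcone Hr; split.
    rewrite -dot_scalel -dot_addl; apply: dot_ext => // i.
    by have := Hr i; rewrite /lp_target /vadd /vscale; lra.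
  exact: cone_tangent_le0 Hcone (fun a Ha => tangent_tight HK Ha).
rewrite /lp_target /= in HN.
case: (Rle_lt_dec tau 0) => Ht.
- have Ht0 : tau = 0 by lra.
  rewrite Ht0 in HN; exists (vadd v c); split; last by rewrite dot_addl; lra.
  apply: subgradient_of_block_bounds => j Hj d HK.
  case: (Hcj j d Hj HK) => E1 E2.
  by have := subgradient_block_bound Hv Hj HK; rewrite dot_addl E1 Ht0; lra.
- have Hi : 0 < / tau by apply: Rinv_0_lt_compat.
  exists (vscale (/ tau) c); split.
    apply: subgradient_of_block_bounds => j Hj d HK.
    case: (Hcj j d Hj HK) => E1 E2.
    rewrite dot_scalel E1 Rmult_plus_distr_l -Rmult_assoc Rinv_l; nra.
  rewrite dot_scalel; have -> : dot c n = 1 + tau * dot v n by rewrite -Hal; lra.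
  by rewrite Rmult_plus_distr_l -Rmult_assoc Rinv_l; lra.
Qed.

End LinearProgram.

Lemma block_value : exists rho, 0 < rho /\ forall j e, dot e e < rho ->
  (is_active j = true -> tangent (piece j) e) -> (is_active j = false -> e = vzero) ->
  th (vadd zb e) = Some (a0 + dot (slope j) e).
Proof.
case: local_structure => rho [Hr [_ H2]]; exists rho; split => // j e He HK H0.
case E: (is_active j).
  have Hact : active (piece j) by apply/is_activeP.
  exact: active_piece_value (piece_in j) Hact (H2 _ _ He (piece_in j) Hact (HK E)).
rewrite (H0 E) dot0r Rplus_0_r -hz; congr th.
by apply: functional_extensionality => i; rewrite /vadd /vzero; ring.
Qed.

(* A decomposition n = sum_j d_j into tangent directions bounds theta along
   n: average the K points zb + K s d_j and apply Jensen's inequality. *)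
Lemma decomposition_bound (n : vec m) (al : R) (d : 'I_K -> vec m) :
  (forall i, \big[Rplus/0]_(j < K) d j i = n i) ->
  (forall j, is_active j = true -> tangent (piece j) (d j)) ->
  (forall j, is_active j = false -> d j = vzero) ->
  \big[Rplus/0]_(j < K) dot (slope j) (d j) <= al ->
  exists s0, 0 < s0 /\ forall s, 0 < s <= s0 ->
    exists val, th (vadd zb (vscale s n)) = Some val /\ val <= a0 + s * al.
Proof.
move=> Hsum HK H0 Hal.
have HK0 : (0 < K)%nat.
  have /hdom [P [HP _]] : edom th zb by exists a0.
  by case: (piece_index HP) => j _; exact: leq_ltn_trans (leq0n j) (ltn_ord j).
set Kr := INR K; have HKr : 0 < Kr by apply: lt_0_INR; apply/ltP.
case: block_value => rho [Hr Hval].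
set D := \big[Rplus/0]_(j < K) dot (d j) (d j).
have HDj j : dot (d j) (d j) <= D.
  exact: (@sum_ge_term _ (fun j => dot (d j) (d j)) j (fun j => dot_self_ge0 (d j))).
have HD : 0 <= Kr * Kr * D.
  by have := HDj (Ordinal HK0); have := dot_self_ge0 (d (Ordinal HK0)); nra.
case: (shrink_factor HD Hr) => s0 [Hs0 [_ Hs0D]]; exists s0; split => // s [Hs Hss].
have Hpt j : th (vadd zb (vscale (Kr * s) (d j))) =
             Some (a0 + Kr * s * dot (slope j) (d j)).
  rewrite (Hval j); first by rewrite dot_scaler; congr Some; ring.
  - have Hss2 : s * s <= s0 * s0 by apply: Rmult_le_compat; lra.
    have := HDj j; have := dot_self_ge0 (d j) => Hn HDj'.
    have : s * s * (Kr * Kr * dot (d j) (d j)) <= s0 * s0 * (Kr * Kr * D).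
      by apply: Rmult_le_compat; nra.
    by rewrite dot_scalel dot_scaler; lra.
  - by move=> Hj; apply: tangent_scale; [nra | apply: HK].
  - by move=> Hj; rewrite (H0 j Hj); apply: functional_extensionality => i;
      rewrite /vscale /vzero; ring.
case: (jensen_uniform hconv HK0 Hpt) => c [Hc1 Hc2]; exists c; split.
  rewrite -Hc1; congr th; apply: functional_extensionality => i.
  rewrite /vadd /vscale big_split /= sum_const_ord -big_distrr /= Hsum -/Kr.
  by field; lra.
move: Hc2; rewrite big_split /= sum_const_ord -big_distrr /= -/Kr.
set S := \big[Rplus/0]_(j < K) _ in Hal *.
have -> : / Kr * (Kr * a0 + Kr * s * S) = a0 + s * S by field; lra.
have : s * S <= s * al by apply: Rmult_le_compat_l; lra.
lra.
Qed.

(* LP duality: either some subgradient beats v in direction n, or n splits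
   into tangent directions of the active pieces with total slope <= <v,n>. *)
Lemma tangent_decomposition v n : subdiff th zb v ->
  (forall c, subdiff th zb c -> dot c n <= dot v n) ->
  exists d : 'I_K -> vec m,
    (forall i, \big[Rplus/0]_(j < K) d j i = n i) /\
    (forall j, is_active j = true -> tangent (piece j) (d j)) /\
    (forall j, is_active j = false -> d j = vzero) /\
    \big[Rplus/0]_(j < K) dot (slope j) (d j) <= dot v n.
Proof.
move=> Hv Hmax.
case: (classic (cone (generators n (dot v n)) lp_target)) => Hc.
  case: (better_subgradient_of_primal Hv erefl Hc) => c [Hc1 Hc2].
  by have := Hmax c Hc1; lra.
case: (farkas Hc) => y [Hy Hytg].
exact: tangent_decomposition_of_certificate Hy Hytg.
Qed.

Lemma directional_upper_bound v n : subdiff th zb v ->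
  (forall c, subdiff th zb c -> dot c n <= dot v n) ->
  exists s0, 0 < s0 /\ forall s, 0 < s <= s0 ->
    exists val, th (vadd zb (vscale s n)) = Some val /\ val <= a0 + s * dot v n.
Proof.
move=> Hv Hmax; case: (tangent_decomposition Hv Hmax) => d [Hs [HK [H0 Hal]]].
exact: decomposition_bound Hs HK H0 Hal.
Qed.

(* When <c,n> is the same for all subgradients c,
   the bound above holds in both directions +-n, and the graph of the
   subdifferential near (zb,v) is invariant under z |-> z + t n. *)

Lemma ray_doubling : exists rho, 0 < rho /\ forall e b, dot e e < rho ->
  th (vadd zb e) = Some b -> th (vadd zb (vscale 2 e)) = Some (2 * b - a0).
Proof.
case: local_structure => rho [Hr [H1 H2]]; exists (rho / 4); split => [|e b He Hb]; first lra.
have /hdom [P [HP Hpol]] : edom th (vadd zb e) by exists b.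
case: (H1 e P ltac:(lra) HP Hpol) => Ha HK.
have Hd : dot (vscale 2 e) (vscale 2 e) < rho by rewrite dot_scalel dot_scaler; lra.
have Hpol2 := H2 _ _ Hd HP Ha (tangent_scale (Rlt_le _ _ Rlt_0_2) HK).
rewrite (active_piece_value HP Ha Hpol2) dot_scaler.
by rewrite (active_piece_value HP Ha Hpol) in Hb; case: Hb => <-; congr Some; ring.
Qed.

Section Translation.
Variables (v n : vec m).
Hypothesis hv : subdiff th zb v.
Hypothesis hflat : forall c, subdiff th zb c -> dot c n = dot v n.

Lemma two_sided_bound : exists t0, 0 < t0 /\ forall t, Rabs t <= t0 ->
  exists val, th (vadd zb (vscale t n)) = Some val /\ val <= a0 + t * dot v n.
Proof.
case: (@directional_upper_bound v n hv) => [c /hflat ->|s1 [Hs1 Hup]]; first lra.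
case: (@directional_upper_bound v (vopp n) hv) => [c /hflat|s2 [Hs2 Hdown]].
  by rewrite !dot_oppr => ->; lra.
exists (Rmin s1 s2); split; first exact: Rmin_pos.
have Hm1 := Rmin_l s1 s2; have Hm2 := Rmin_r s1 s2.
move=> t Ht; case: (Rtotal_order t 0) => [Hneg|[->|Hpos]].
- rewrite Rabs_left // in Ht.
  case: (Hdown (- t) ltac:(lra)) => val [Hval Hle]; exists val; split.
    by rewrite -Hval; congr th; apply: functional_extensionality => i;
      rewrite /vadd /vscale /vopp; ring.
  by rewrite dot_oppr in Hle; lra.
- exists a0; split; last lra; rewrite -hz; congr th.
  by apply: functional_extensionality => i; rewrite /vadd /vscale; ring.
- by rewrite Rabs_right in Ht; [apply: Hup; lra | lra].
Qed.

(* Near zb, theta grows at rate at most <v,n> along n, from any base point: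
   z + t n is the midpoint of 2z - zb and zb + 2t n. *)
Lemma upper_bound_near : exists rho t0, 0 < rho /\ 0 < t0 /\
  forall z b, dot (vsub z zb) (vsub z zb) < rho -> th z = Some b ->
  forall t, Rabs t <= t0 ->
    exists c, th (vadd z (vscale t n)) = Some c /\ c <= b + t * dot v n.
Proof.
case: two_sided_bound => t1 [Ht1 Hb1]; case: ray_doubling => rho [Hr Hdbl].
exists rho, (t1 / 2); do 2!split => //; first lra.
move=> z b Hz Hb t Ht.
have H2z := Hdbl _ _ Hz (etrans (f_equal th (vadd_vsub zb z)) Hb).
have H2t : Rabs (2 * t) <= t1 by rewrite Rabs_mult Rabs_right; lra.
case: (Hb1 _ H2t) => val [Hval Hle].
case: (hconv H2z Hval (ltac:(lra) : 0 <= / 2 <= 1)) => c [Hc Hcle].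
exists c; split; last lra.
by rewrite -Hc; congr th; apply: functional_extensionality => i;
  rewrite /vadd /vscale /vsub; field.
Qed.

Lemma translate_subgradient : exists rho t0, 0 < rho /\ 0 < t0 /\
  forall z w, dot (vsub z zb) (vsub z zb) < rho -> subdiff th z w ->
  forall t, Rabs t <= t0 -> subdiff th (vadd z (vscale t n)) w.
Proof.
case: upper_bound_near => rho [t0 [Hr [Ht0 Hup]]].
exists rho, t0; do 2!split => //; move=> z w Hz [b [Hb Hsub]].
have Hmove t : dot w (vsub (vadd z (vscale t n)) z) = t * dot w n.
  by rewrite -dot_scaler; apply: dot_ext => // i; rewrite /vsub /vadd /vscale; ring.
have Hwn : dot w n = dot v n.
  have [c1 [Hc1 Hle1]] := Hup z b Hz Hb t0 ltac:(rewrite Rabs_right; lra).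
  have [c2 [Hc2 Hle2]] := Hup z b Hz Hb (- t0) ltac:(rewrite Rabs_Ropp Rabs_right; lra).
  by have := Hsub _ _ Hc1; have := Hsub _ _ Hc2; rewrite !Hmove; nra.
move=> t Ht; case: (Hup z b Hz Hb t Ht) => c [Hc Hle].
exists c; split => // x bx Hx; have := Hsub x bx Hx.
have -> : dot w (vsub x (vadd z (vscale t n))) = dot w (vsub x z) - t * dot w n.
  by rewrite -dot_scaler -dot_subr; apply: dot_ext => // i;
    rewrite /vsub /vadd /vscale; ring.
rewrite Hwn; lra.
Qed.

Lemma limiting_normal_orthogonal w q :
  lim_normal (gph (subdiff th)) (zb, v) (w, q) -> dot w n = 0.
Proof.
move=> [_ [xs [vs [Hxs [Hpx [Hreg Hpv]]]]]].
case: translate_subgradient => rho [t0 [Hr [Ht0 HT]]].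
case: (Hpx (sqrt rho) (sqrt_lt_R0 _ Hr)) => N HN.
apply: (@orthogonal_limit _ vs (w, q) n N Hpv) => k Hk.
apply: (regular_normal_orthogonal Ht0 _ (Hreg k)) => t Ht; apply: HT => //; last exact: Hxs.
have := pnorm_lt_sqrt (HN k Hk); rewrite /pdot /psub /=.
by have := dot_self_ge0 (vsub (xs k).2 v); lra.
Qed.

End Translation.
End Polyhedral.

Section Subgradients.
Variables (m : nat) (th : efun m) (zb : vec m).

Lemma subdiff_convex c1 c2 t : subdiff th zb c1 -> subdiff th zb c2 -> 0 <= t <= 1 ->
  subdiff th zb (vadd (vscale t c1) (vscale (1 - t) c2)).
Proof.
move=> [a [Ha H1]] [a' [Ha' H2]] Ht; rewrite Ha in Ha'; case: Ha' => Ea; subst a'.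
exists a; split => // x b Hx; have := H1 x b Hx; have := H2 x b Hx.
by rewrite dot_addl !dot_scalel; nra.
Qed.

Lemma subdiff_monotone z v z' v' : subdiff th z v -> subdiff th z' v' ->
  0 <= dot (vsub v v') (vsub z z').
Proof.
move=> [b [Hb H1]] [b' [Hb' H2]]; have := H1 _ _ Hb'; have := H2 _ _ Hb.
by rewrite dot_subl !dot_subr; lra.
Qed.

Definition comb (L : list (R * vec m)) : vec m :=
  fold_right (fun p s => vadd (vscale (fst p) (snd p)) s) vzero L.
Definition weight (L : list (R * vec m)) : R := fold_right (fun p s => fst p + s) 0 L.

Lemma S_sub_of_comb vb L w : subdiff th zb vb ->
  (forall p, In p L -> subdiff th zb (snd p)) -> weight L = 0 ->
  (forall i, w i = comb L i) -> S_sub th zb w.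
Proof.
move=> Hvb HL HwL Hw; exists (comb ((1, vb) :: L)), (comb ((1, vb) :: nil)).
split; [|split].
- exists ((1, vb) :: L); split; first by move=> p [<-|Hp] //; apply: HL.
  by split => //; rewrite /= -/(weight L) HwL; ring.
- exists ((1, vb) :: nil); split; first by move=> p [<-|].
  by split => //; rewrite /=; ring.
- apply: functional_extensionality => i.
  by rewrite Hw /vsub /comb /= /vadd /vscale /vzero; ring.
Qed.

(* Conversely, every element of S(zb) has the form P (p - q) with p, q
   subgradients and P >= 0: split a zero-weight combination into its positive
   and negative parts, each a multiple of a convex combination. *)
Lemma comb_split vb L : subdiff th zb vb -> (forall p, In p L -> subdiff th zb (snd p)) ->
  exists P N p q, 0 <= P /\ 0 <= N /\ subdiff th zb p /\ subdiff th zb q /\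
    weight L = P - N /\ forall i, comb L i = P * p i - N * q i.
Proof.
move=> Hvb; elim: L => [|[mu x] L IH] HL.
  exists 0, 0, vb, vb; split; first lra; split; first lra; do 2!split => //.
  by split => [|i]; rewrite /= ?/vzero; ring.
have Hx : subdiff th zb x by apply: (HL (mu, x)); left.
case: IH => [p0 Hp0|P [N [p [q [HP [HN [Hp [Hq [Hs HF]]]]]]]]]; first by apply: HL; right.
have Hmix X Y Z : 0 < X + Y -> 0 <= X -> 0 <= Y -> subdiff th zb Z ->
    forall W, subdiff th zb W -> subdiff th zb (vadd (vscale (X / (X + Y)) W)
                                                     (vscale (1 - X / (X + Y)) Z)).
  move=> HXY HX HY HZ W HW; apply: subdiff_convex => //; split.
    by apply: Rmult_le_pos => //; apply/Rlt_le/Rinv_0_lt_compat.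
  by apply: (Rmult_le_reg_r (X + Y)) => //; rewrite /Rdiv Rmult_assoc Rinv_l; lra.
case: (Rle_lt_dec 0 mu) => Hmu.
- case: (Req_dec (P + mu) 0) => HPm.
    have HP0 : P = 0 by lra.
    have Hm0 : mu = 0 by lra.
    exists 0, N, p, q; split; first lra; do 3!split => //.
    split; first by rewrite /= -/(weight L) Hs HP0 Hm0; ring.
    by move=> i; rewrite /comb /= -/(comb L) /vadd /vscale HF HP0 Hm0; ring.
  exists (P + mu), N, (vadd (vscale (P / (P + mu)) p) (vscale (1 - P / (P + mu)) x)), q.
  split; first lra; split => //; split; first by apply: Hmix => //; lra.
  split => //.
  split; first by rewrite /= -/(weight L) Hs; ring.
  by move=> i; rewrite /comb /= -/(comb L) /vadd /vscale HF; field; lra.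
- exists P, (N - mu), p, (vadd (vscale (N / (N + - mu)) q) (vscale (1 - N / (N + - mu)) x)).
  split => //; split; first lra; split => //; split; first by apply: Hmix => //; lra.
  split; first by rewrite /= -/(weight L) Hs; ring.
  by move=> i; rewrite /comb /= -/(comb L) /vadd /vscale HF; field; lra.
Qed.

Definition subgradient_difference (u : vec m) :=
  exists c1 c2, subdiff th zb c1 /\ subdiff th zb c2 /\ u = vsub c1 c2.

Lemma comb_of_difference_cone (D : list (vec m)) w :
  (forall d, In d D -> subgradient_difference d) -> cone (D ++ map vopp D) w ->
  exists L, (forall p, In p L -> subdiff th zb (snd p)) /\ weight L = 0 /\
            forall i, w i = comb L i.
Proof.
move=> HD; apply: (@cone_ind _ (fun t => exists L,
    (forall p, In p L -> subdiff th zb (snd p)) /\ weight L = 0 /\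
    forall i, t i = comb L i)) => [t Ht | t g mu /in_app_iff Hg Hmu [L [HL [HwL Ht]]]].
  by exists nil; split => //; split => // i; rewrite Ht.
have [c1 [c2 [s [Hc1 [Hc2 [Hs Eg]]]]]] : exists c1 c2 s, subdiff th zb c1 /\
    subdiff th zb c2 /\ (s = 1 \/ s = -1) /\ forall i, g i = s * (c1 i - c2 i).
  case: Hg => [/HD [c1 [c2 [H1 [H2 ->]]]]|/in_map_iff [d [<- /HD [c1 [c2 [H1 [H2 ->]]]]]]].
    by exists c1, c2, 1; do 3!split => //; [left | move=> i; rewrite /vsub; ring].
  by exists c1, c2, (-1); do 3!split => //; [right | move=> i; rewrite /vopp /vsub; ring].
exists ((s * mu, c1) :: (- (s * mu), c2) :: L); split.
  by move=> p [<-|[<-|/HL]].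
split; first by rewrite /= -/(weight L) HwL; ring.
by move=> i; have := Ht i; rewrite /comb /= -/(comb L) /vadd /vscale Eg; lra.
Qed.

(* Every w orthogonal to all directions n on which subgradients agree lies in
   S(zb): S(zb) is spanned by finitely many differences (finite_spanning_subset),
   and Farkas lemma for the cone they and their opposites generate produces
   such an n otherwise. *)
Lemma S_sub_of_orthogonal vb w : subdiff th zb vb ->
  (forall n, (forall c, subdiff th zb c -> dot c n = dot vb n) -> dot w n = 0) ->
  S_sub th zb w.
Proof.
move=> Hvb Horth.
case: (finite_spanning_subset subgradient_difference) => D [HD Hspan].
suff /(comb_of_difference_cone HD) [L [HL [HwL Hw]]] : cone (D ++ map vopp D) w.
  exact: S_sub_of_comb Hvb HL HwL Hw.
apply: NNPP => /farkas [y [Hy Hyw]].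
have HyD : forall d, In d D -> dot y d = 0.
  move=> d Hd; have H1 := Hy d (in_or_app _ _ _ (or_introl Hd)).
  have H2 := Hy (vopp d) (in_or_app _ _ _ (or_intror (in_map _ _ _ Hd))).
  by rewrite fdot_oppr in H2; change (fdot y d = 0); lra.
have Hflat c : subdiff th zb c -> dot c y = dot vb y.
  move=> Hc; have Hdiff : subgradient_difference (vsub c vb) by exists c, vb.
  have := Hspan y HyD _ Hdiff.
  by rewrite dot_subr (dot_sym y c) (dot_sym y vb); lra.
by have := Horth y Hflat; rewrite dot_sym; change (dot y w < 0) in Hyw; lra.
Qed.

Lemma comb_app L1 L2 i : comb (L1 ++ L2) i = comb L1 i + comb L2 i.
Proof. by elim: L1 => [|p L1 IH] /=; rewrite /vzero ?/vadd ?IH; ring. Qed.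

Lemma weight_app L1 L2 : weight (L1 ++ L2) = weight L1 + weight L2.
Proof. by elim: L1 => [|p L1 IH] /=; rewrite ?IH; ring. Qed.

Definition negate (L : list (R * vec m)) := map (fun p => (- fst p, snd p)) L.

Lemma comb_negate L i : comb (negate L) i = - comb L i.
Proof. by elim: L => [|p L IH] /=; rewrite /vzero ?/vadd ?/vscale ?IH /=; ring. Qed.

Lemma weight_negate L : weight (negate L) = - weight L.
Proof. by elim: L => [|p L IH] /=; rewrite ?IH; ring. Qed.

Lemma S_sub_difference vb w : subdiff th zb vb -> S_sub th zb w ->
  exists P p q, 0 <= P /\ subdiff th zb p /\ subdiff th zb q /\
    forall i, w i = P * (p i - q i).
Proof.
move=> Hvb [a [b [[La [HLa [HwLa ->]]] [[Lb [HLb [HwLb ->]]] ->]]]].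
have HL : forall p, In p (La ++ negate Lb) -> subdiff th zb (snd p).
  by move=> p /in_app_iff [/HLa|/in_map_iff [p' [<- /HLb]]].
case: (comb_split Hvb HL) => P [N [p [q [HP [HN [Hp [Hq [Hs HF]]]]]]]].
change (weight La = 1) in HwLa; change (weight Lb = 1) in HwLb.
have HPN : P = N by move: Hs; rewrite weight_app weight_negate; lra.
exists P, p, q; split => //; split => //; split => // i.
have := HF i; rewrite comb_app comb_negate /vsub -HPN.
by rewrite -/(comb La) -/(comb Lb); lra.
Qed.

(* If w = P (p - q), then (w, 0) is a regular normal to the graph of the
   subdifferential at (zb, v_r) with v_r = (1 - r) vb + r q: monotonicity
   against c_r = (1 - r) vb + r p gives <w, z - zb> <= (P/r) <v - v_r, z - zb>,
   which is quadratic in the distance to (zb, v_r). *)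
Lemma regular_normal_of_difference vb p q P r w :
  subdiff th zb vb -> subdiff th zb p -> subdiff th zb q -> 0 <= P -> 0 < r <= 1 ->
  (forall i, w i = P * (p i - q i)) ->
  reg_normal (gph (subdiff th)) (zb, vadd (vscale (1 - r) vb) (vscale r q)) (w, vopp vzero).
Proof.
move=> Hvb Hp Hq HP Hr Hw.
have Hmid c : subdiff th zb c -> subdiff th zb (vadd (vscale (1 - r) vb) (vscale r c)).
  by move=> Hc; have := subdiff_convex Hvb Hc (ltac:(lra) : 0 <= 1 - r <= 1);
    rewrite (_ : 1 - (1 - r) = r) //; ring.
set vr := vadd _ (vscale r q); split; first exact: Hmid.
move=> eps He; set kap := P / r.
have Hkap : 0 <= kap by apply: Rmult_le_pos => //; apply/Rlt_le/Rinv_0_lt_compat; lra.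
exists (eps / (kap + 1)); split; first by apply: Rdiv_lt_0_compat; lra.
move=> [z v] Hzv [_ Hpn]; set pn := pnorm _ in Hpn *; set E := vsub z zb.
have Hpn2 : pn * pn = dot E E + dot (vsub v vr) (vsub v vr) by rewrite /pn pnorm_sq.
have -> : pdot (w, vopp vzero) (psub (z, v) (zb, vr)) = dot w E.
  rewrite /pdot /= -/E (@dot_ext _ (vopp vzero) _ vzero (vsub v vr)) ?dot0l; first ring.
  - by move=> i; rewrite /vopp /vzero; ring.
  - by [].
have Hmono : 0 <= dot (vsub v (vadd (vscale (1 - r) vb) (vscale r p))) E
  := subdiff_monotone Hzv (Hmid p Hp).
have Hsplit : dot (vsub v (vadd (vscale (1 - r) vb) (vscale r p))) E =
              dot (vsub v vr) E - r * dot (vsub p q) E.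
  by rewrite -dot_scalel -dot_subl; apply: dot_ext => // i;
    rewrite /vsub /vr /vadd /vscale; ring.
have Hwe : dot w E = kap * (r * dot (vsub p q) E).
  rewrite /kap -Rmult_assoc (_ : P / r * r = P); last by field; lra.
  by rewrite -dot_scalel; apply: dot_ext => // i; rewrite Hw /vscale /vsub.
have Hamgm := dot_amgm (vsub v vr) E.
have Hpe : kap * pn <= eps.
  have Hle : pn <= eps / (kap + 1) by lra.
  have : kap * (eps / (kap + 1)) <= eps.
    have -> : kap * (eps / (kap + 1)) = eps - eps / (kap + 1) by field; lra.
    have : 0 < eps / (kap + 1) by apply: Rdiv_lt_0_compat; lra.
    lra.
  by have := Rmult_le_compat_l _ _ _ Hkap Hle; lra.
have Hpn0 : 0 <= pn by apply: sqrt_pos.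
have : dot w E <= kap * (pn * pn).
  rewrite Hwe; apply: Rmult_le_compat_l => //.
  by have := dot_self_ge0 E; have := dot_self_ge0 (vsub v vr); lra.
by have := Rmult_le_compat_r _ _ _ Hpn0 Hpe; lra.
Qed.

(* The inclusion S(zb) <= d^2 theta(zb,vb)(0): approximate (zb,vb) along
   subgradients v_k -> vb at which (w,0) is a regular normal. *)
Lemma S_sub_limiting_normal vb w : subdiff th zb vb -> S_sub th zb w ->
  lim_normal (gph (subdiff th)) (zb, vb) (w, vopp vzero).
Proof.
move=> Hvb /(S_sub_difference Hvb) [P [p [q [HP [Hp [Hq Hw]]]]]].
have Hr k : 0 < / (INR k + 1) <= 1.
  have := pos_INR k; split; first by apply: Rinv_0_lt_compat; lra.
  by rewrite -Rinv_1; apply: Rinv_le_contravar; lra.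
have Hreg k := regular_normal_of_difference Hvb Hp Hq HP (Hr k) Hw.
split => //.
exists (fun k => (zb, vadd (vscale (1 - / (INR k + 1)) vb) (vscale (/ (INR k + 1)) q))).
exists (fun _ => (w, vopp vzero)).
split; first by move=> k; case: (Hreg k).
split; first exact: pconv_segment.
by split; [exact: Hreg | exact: pconv_const].
Qed.

End Subgradients.

Unset Implicit Arguments.

Theorem mainTheorem6 (m : nat) (th : efun m) (zb : vec m) :
  piecewise_linear th ->
  (exists v, subdiff th zb v) ->
  forall vb, subdiff th zb vb ->
    forall w, subdiff2 th zb vb vzero w <-> S_sub th zb w.
Proof.
move=> [hconv [_ [pieces [hdom haff]]]] _ vb Hvb w.
have [a0 hz] : exists a0, th zb = Some a0 by case: Hvb => a [Ha _]; exists a.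
split => [Hnormal | HS].
- apply: (S_sub_of_orthogonal Hvb) => n Hflat.
  exact: (limiting_normal_orthogonal hconv hdom haff hz Hvb Hflat Hnormal).
- exact: S_sub_limiting_normal Hvb HS.
Qed.
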